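(* Let $\gamma\ge 2$ be an integer, $\delta>0$, and let $\mu$ range over an arbitrary parameter set. Let $F(\rho,\mu)$ be complex valued and, for each $\mu$, smooth in $\rho\in[0,\delta)$; set $a_j(\mu)=\partial_\rho^jF(0,\mu)/j!$. Assume (F1) $a_0(\mu)=a_1(\mu)=0$ for all $\mu$; (F2) there is $C>0$ with $\sum_{j=2}^{\gamma}|a_j(\mu)|\ge C$ for all $\mu$; (F3) for each $\mu$, $|\partial_\rho F(\rho,\mu)|$ is increasing in $\rho$ for $0<\rho<\delta$; (F4') for every $k\in\mathbb{N}$, $\partial_\rho^kF(\rho,\mu)$ is bounded uniformly in $0<\rho<\delta$ and $\mu$. Then, provided $\delta$ is sufficiently small, there exist constants $C>0$ and $C_m>0$ ($m\in\mathbb{N}$) such that for all $0<\rho<\delta$, all $\mu$ and all $m\in\mathbb{N}$, $$|\partial_\rho F(\rho,\mu)|\ge C\rho^{\gamma-1}\qquad\text{and}\qquad |\partial_\rho^mF(\rho,\mu)|\le C_m\rho^{1-m}|\partial_\rho F(\rho,\mu)|.$$ *)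

(* classical reals. A complex number is represented by its
   (real part, imaginary part). *)
From Stdlib Require Import Reals Arith ZArith.
Open Scope R_scope.

Definition cnorm (x y : R) : R := sqrt (x * x + y * y).

Definition right_deriv (f : R -> R) (x l : R) : Prop :=
  forall eps, 0 < eps -> exists d, 0 < d /\
    forall h, 0 < h < d -> Rabs ((f (x + h) - f x) / h - l) < eps.

(* [smooth_on_0d delta f] : the sequence f k (k-th derivative) is a
   tower of derivatives of f 0 on [0, delta): two-sided derivatives on
   (0, delta), right derivative at 0. *)
Definition smooth_on_0d (delta : R) (f : nat -> R -> R) : Prop :=
  forall k,
    right_deriv (f k) 0 (f (S k) 0) /\
    forall r, 0 < r < delta -> derivable_pt_lim (f k) r (f (S k) r).

From Stdlib Require Import Reals Arith ZArith Lra Lia List FinFun IndefiniteDescription.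
Import ListNotations.
Open Scope R_scope.

(* Write F = u + i v and treat u and v separately.  Taylor's formula to order
   gamma bounds the degree < gamma Taylor polynomial of F' on (0, rho] by
   |F'(rho)| (which dominates |F'| there, by (F3)) plus B rho^gamma, B a bound
   on the (gamma+1)-st derivative (F4').  A polynomial of bounded degree is
   controlled by its values at gamma equally spaced nodes, so
   |a_j| rho^(j-1) <= K (|F'(rho)| + B rho^gamma) for 1 <= j <= gamma.  Together
   with (F2) this gives rho^(gamma-1) <= K' (|F'(rho)| + B rho^gamma), hence the
   lower bound once B rho is small, and then B rho^gamma <= |F'(rho)|.  Feeding
   the coefficient bound back into Taylor's formula for the m-th derivative
   gives the upper bound for m <= gamma; for m > gamma the uniform bound (F4')
   and the lower bound suffice. *)

Lemma Rabs_le_cnorm_l x y : Rabs x <= cnorm x y.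
Proof. unfold cnorm; rewrite <- sqrt_Rsqr_abs; apply sqrt_le_1_alt; unfold Rsqr; nra. Qed.

Lemma Rabs_le_cnorm_r x y : Rabs y <= cnorm x y.
Proof. unfold cnorm; rewrite <- sqrt_Rsqr_abs; apply sqrt_le_1_alt; unfold Rsqr; nra. Qed.

Lemma cnorm_ge0 x y : 0 <= cnorm x y.
Proof. apply sqrt_pos. Qed.

Lemma cnorm_le_Rabs_add x y : cnorm x y <= Rabs x + Rabs y.
Proof.
  pose proof (Rabs_pos x); pose proof (Rabs_pos y).
  unfold cnorm; rewrite <- (sqrt_Rsqr (Rabs x + Rabs y)) by lra.
  apply sqrt_le_1_alt; unfold Rsqr.
  assert (x * x = Rabs x * Rabs x) by (rewrite <- Rabs_mult, Rabs_right; nra).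
  assert (y * y = Rabs y * Rabs y) by (rewrite <- Rabs_mult, Rabs_right; nra).
  nra.
Qed.

Lemma Rle_pow_le1 x m n : 0 <= x <= 1 -> (m <= n)%nat -> x ^ n <= x ^ m.
Proof.
  intros Hx Hmn; replace n with (m + (n - m))%nat by lia; rewrite pow_add.
  assert (x ^ (n - m) <= 1) by (rewrite <- (pow1 (n - m)); apply pow_incr; lra).
  pose proof (pow_le x m ltac:(lra)); nra.
Qed.

Lemma powerRZ_1_sub r m : 0 < r -> powerRZ r (1 - Z.of_nat m) = r / r ^ m.
Proof.
  intros Hr; replace (1 - Z.of_nat m)%Z with (1 + - Z.of_nat m)%Z by lia.
  rewrite powerRZ_add, powerRZ_neg', <- pow_powerRZ by lra.
  simpl; unfold Rdiv; ring.
Qed.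

Lemma INR_fact_ge1 n : 1 <= INR (fact n).
Proof. apply (le_INR 1); pose proof (lt_O_fact n); lia. Qed.

Lemma Rinv_INR_fact_le1 n : 0 < / INR (fact n) <= 1.
Proof.
  pose proof (INR_fact_ge1 n); split; [apply Rinv_0_lt_compat; lra|].
  rewrite <- Rinv_1; apply Rinv_le_contravar; lra.
Qed.
Definition right_continuous (f : R -> R) (x : R) : Prop :=
  forall e, 0 < e -> exists eta, 0 < eta /\
    forall t, x < t < x + eta -> Rabs (f t - f x) < e.

Lemma right_deriv_continuous f x l : right_deriv f x l -> right_continuous f x.
Proof.
  intros Hf e He; destruct (Hf 1 ltac:(lra)) as [d [Hd Hq]].
  pose proof (Rabs_pos l).
  exists (Rmin d (e / (Rabs l + 1))); split.
  { apply Rmin_glb_lt; [lra|apply Rdiv_lt_0_compat; lra]. }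
  intros t Ht; set (h := t - x).
  assert (h < d) by (pose proof (Rmin_l d (e / (Rabs l + 1))); unfold h; lra).
  assert (Hhe : h < e / (Rabs l + 1)) by (pose proof (Rmin_r d (e / (Rabs l + 1))); unfold h; lra).
  assert (Hh0 : 0 < h) by (unfold h; lra).
  specialize (Hq h ltac:(lra)); replace (x + h) with t in Hq by (unfold h; ring).
  assert (Hslope : Rabs ((f t - f x) / h) < Rabs l + 1).
  { pose proof (Rabs_triang ((f t - f x) / h - l) l).
    replace ((f t - f x) / h - l + l) with ((f t - f x) / h) in * by ring; lra. }
  replace (f t - f x) with ((f t - f x) / h * h) by (field; unfold h; lra).
  rewrite Rabs_mult, (Rabs_right h) by (unfold h; lra).
  apply Rmult_lt_compat_r with (r := Rabs l + 1) in Hhe; [|lra].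
  replace (e / (Rabs l + 1) * (Rabs l + 1)) with e in Hhe by (field; lra).
  nra.
Qed.

Lemma derivable_pt_lim_right_deriv f x l : derivable_pt_lim f x l -> right_deriv f x l.
Proof.
  intros Hf eps He; destruct (Hf eps He) as [d Hd].
  exists d; split; [apply cond_pos|].
  intros h Hh; apply Hd; [lra|rewrite Rabs_right; lra].
Qed.

Lemma right_continuous_minus f g x :
  right_continuous f x -> right_continuous g x -> right_continuous (fun t => f t - g t) x.
Proof.
  intros Hf Hg e He.
  destruct (Hf (e / 2) ltac:(lra)) as [e1 [He1 H1]].
  destruct (Hg (e / 2) ltac:(lra)) as [e2 [He2 H2]].
  exists (Rmin e1 e2); split; [apply Rmin_glb_lt; lra|].
  intros t Ht; pose proof (Rmin_l e1 e2); pose proof (Rmin_r e1 e2).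
  specialize (H1 t ltac:(lra)); specialize (H2 t ltac:(lra)).
  replace (f t - g t - (f x - g x)) with ((f t - f x) + - (g t - g x)) by ring.
  eapply Rle_lt_trans; [apply Rabs_triang|]; rewrite Rabs_Ropp; lra.
Qed.

(* Apply the mean value theorem on [eps, t] and let eps tend to 0+ by right continuity. *)
Lemma Rabs_le_of_deriv_le_pow (h h' : R -> R) r K d :
  right_continuous h 0 -> h 0 = 0 ->
  (forall c, 0 < c < r -> derivable_pt_lim h c (h' c)) ->
  (forall c, 0 < c < r -> Rabs (h' c) <= K * c ^ d) ->
  forall t, 0 < t < r -> Rabs (h t) <= K * t ^ S d.
Proof.
  intros Hc H0 Hd Hb t Ht.
  destruct (Rle_or_lt (Rabs (h t)) (K * t ^ S d)) as [|Hlt]; [assumption|exfalso].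
  set (e := Rabs (h t) - K * t ^ S d).
  destruct (Hc e ltac:(unfold e; lra)) as [eta [Heta Hh]].
  set (eps := Rmin (eta / 2) (t / 2)).
  assert (eps <= eta / 2) by apply Rmin_l.
  assert (eps <= t / 2) by apply Rmin_r.
  assert (0 < eps) by (apply Rmin_glb_lt; lra).
  destruct (MVT_abs h h' eps t) as [c [Hmvt Hc']].
  { intros c Hc'; rewrite Rmin_left, Rmax_right in Hc' by lra; apply Hd; lra. }
  rewrite Rmin_left, Rmax_right in Hc' by lra.
  specialize (Hh eps ltac:(lra)); rewrite H0, Rminus_0_r in Hh.
  assert (Hh'c : Rabs (h' c) <= K * t ^ d).
  { eapply Rle_trans; [apply Hb; lra|].
    assert (0 <= K) by (pose proof (Hb c ltac:(lra)); pose proof (Rabs_pos (h' c));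
                        pose proof (pow_lt c d ltac:(lra)); nra).
    apply Rmult_le_compat_l; [lra|apply pow_incr; lra]. }
  rewrite Rabs_right with (r := t - eps) in Hmvt by lra.
  pose proof (Rabs_triang_inv (h t) (h eps)).
  pose proof (pow_le t d ltac:(lra)); pose proof (Rabs_pos (h' c)).
  unfold e in Hh; simpl in Hh; nra.
Qed.

Fixpoint sum_upto (d : nat) (g : nat -> R) : R :=
  match d with O => 0 | S d' => sum_upto d' g + g d' end.

Lemma sum_upto_ext d g1 g2 :
  (forall l, (l < d)%nat -> g1 l = g2 l) -> sum_upto d g1 = sum_upto d g2.
Proof.
  induction d as [|d IH]; intros H; simpl; [reflexivity|].
  rewrite IH by (intros; apply H; lia); rewrite H by lia; reflexivity.
Qed.

Lemma sum_upto_le d g1 g2 :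
  (forall l, (l < d)%nat -> g1 l <= g2 l) -> sum_upto d g1 <= sum_upto d g2.
Proof.
  induction d as [|d IH]; intros H; simpl; [lra|].
  pose proof (IH ltac:(intros; apply H; lia)); pose proof (H d ltac:(lia)); lra.
Qed.

Lemma Rabs_sum_upto d g : Rabs (sum_upto d g) <= sum_upto d (fun l => Rabs (g l)).
Proof.
  induction d as [|d IH]; simpl; [rewrite Rabs_R0; lra|].
  eapply Rle_trans; [apply Rabs_triang|lra].
Qed.

Lemma sum_upto_const d c : sum_upto d (fun _ => c) = INR d * c.
Proof. induction d as [|d IH]; simpl sum_upto; [simpl; ring|rewrite IH, S_INR; ring]. Qed.

Definition taylor (f : nat -> R -> R) (k d : nat) (t : R) : R :=
  sum_upto d (fun l => f (k + l)%nat 0 * t ^ l / INR (fact l)).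

Lemma taylor_derive f k d t : derivable_pt_lim (taylor f k (S d)) t (taylor f (S k) d t).
Proof.
  revert t; induction d as [|d IH]; intros t.
  - apply derivable_pt_lim_ext with (f := fun _ => f (k + 0)%nat 0 * 1 / 1).
    { intros; unfold taylor; simpl; ring. }
    apply derivable_pt_lim_const.
  - set (a := f (k + S d)%nat 0 / INR (fact (S d))).
    apply derivable_pt_lim_ext with (f := fun t => taylor f k (S d) t + a * t ^ S d).
    { intros x; unfold taylor, a; cbn [sum_upto]; unfold Rdiv; ring. }
    replace (taylor f (S k) (S d) t) with (taylor f (S k) d t + a * (INR (S d) * t ^ pred (S d))).
    2:{ unfold taylor, a; cbn [sum_upto]; f_equal.
        replace (S k + d)%nat with (k + S d)%nat by lia.
        rewrite fact_simpl, mult_INR; simpl pred.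
        field; split; [apply INR_fact_neq_0|apply not_0_INR; lia]. }
    apply derivable_pt_lim_plus; [apply IH|].
    apply derivable_pt_lim_scal, derivable_pt_lim_pow.
Qed.

Lemma taylor_at0 f k d : taylor f k (S d) 0 = f k 0.
Proof.
  induction d as [|d IH]; unfold taylor in *; simpl sum_upto in *.
  - rewrite Nat.add_0_r; simpl; field.
  - rewrite IH; simpl; unfold Rdiv; ring.
Qed.

Section TaylorRemainder.

Variables (delta B : R) (f : nat -> R -> R) (n : nat).
Hypothesis Hf : smooth_on_0d delta f.
Hypothesis HB : forall r, 0 < r < delta -> Rabs (f n r) <= B.

Lemma taylor_remainder d k t :
  (k + d = n)%nat -> 0 < t < delta -> Rabs (f k t - taylor f k d t) <= B * t ^ d.
Proof.
  revert k t; induction d as [|d IH]; intros k t Hk Ht.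
  - rewrite Nat.add_0_r in Hk; subst k.
    unfold taylor; simpl; rewrite Rminus_0_r, Rmult_1_r; auto.
  - apply (Rabs_le_of_deriv_le_pow (fun t => f k t - taylor f k (S d) t)
             (fun t => f (S k) t - taylor f (S k) d t) delta); auto.
    + apply right_continuous_minus.
      * apply (right_deriv_continuous _ _ _ (proj1 (Hf k))).
      * apply right_deriv_continuous with (l := taylor f (S k) d 0).
        apply derivable_pt_lim_right_deriv, taylor_derive.
    + rewrite taylor_at0; ring.
    + intros c Hc; apply derivable_pt_lim_minus; [apply (proj2 (Hf k)); auto|apply taylor_derive].
    + intros c Hc; apply IH; [lia|auto].
Qed.

End TaylorRemainder.

Fixpoint horner (cs : list R) (x : R) : R :=
  match cs with [] => 0 | c :: cs' => c + x * horner cs' x end.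

Fixpoint synth_div (a : R) (cs : list R) : list R :=
  match cs with
  | [] => []
  | _ :: cs' => match cs' with [] => [] | _ => horner cs' a :: synth_div a cs' end
  end.

Lemma horner_synth_div a cs x : horner cs x = horner cs a + (x - a) * horner (synth_div a cs) x.
Proof.
  induction cs as [|c [|c' cs'] IH]; [simpl; ring|simpl; ring|].
  change (horner (c :: c' :: cs') x) with (c + x * horner (c' :: cs') x).
  change (synth_div a (c :: c' :: cs')) with (horner (c' :: cs') a :: synth_div a (c' :: cs')).
  rewrite IH; simpl; ring.
Qed.

Lemma length_synth_div a c cs : length (synth_div a (c :: cs)) = length cs.
Proof. revert c; induction cs as [|c' cs IH]; intros c; simpl; [reflexivity|f_equal; exact (IH c')]. Qed.

Lemma coefs_le_of_synth_div a B cs :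
  cs <> [] -> Rabs (horner cs a) <= B -> Forall (fun b => Rabs b <= B) (synth_div a cs) ->
  Forall (fun c => Rabs c <= (1 + Rabs a) * B) cs.
Proof.
  induction cs as [|c [|c' cs'] IH]; intros Hne Ha Hq; [congruence| |].
  - assert (0 <= B) by (pose proof (Rabs_pos (horner [c] a)); lra).
    simpl in Ha; rewrite Rmult_0_r, Rplus_0_r in Ha.
    pose proof (Rabs_pos a); constructor; [nra|constructor].
  - change (synth_div a (c :: c' :: cs')) with (horner (c' :: cs') a :: synth_div a (c' :: cs')) in Hq.
    change (horner (c :: c' :: cs') a) with (c + a * horner (c' :: cs') a) in Ha.
    apply Forall_cons_iff in Hq as [Hc' Hrest].
    constructor; [|apply IH; [congruence|assumption..]].
    replace c with ((c + a * horner (c' :: cs') a) + - (a * horner (c' :: cs') a)) by ring.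
    eapply Rle_trans; [apply Rabs_triang|rewrite Rabs_Ropp, Rabs_mult].
    pose proof (Rabs_pos a); pose proof (Rabs_pos (horner (c' :: cs') a)); nra.
Qed.

Lemma exists_bound_on_list (g : R -> R) (l : list R) :
  exists D, 0 <= D /\ forall x, In x l -> g x <= D.
Proof.
  induction l as [|x l [D [HD HgD]]]; [exists 0; split; [lra|intros ? []]|].
  exists (Rmax (Rmax 0 (g x)) D); split; [apply Rle_trans with D; [lra|apply Rmax_r]|].
  intros y [<-|Hy].
  - eapply Rle_trans; [apply Rmax_r|apply Rmax_l].
  - eapply Rle_trans; [apply HgD, Hy|apply Rmax_r].
Qed.

(* Divided differences: the values of [synth_div a cs] at the other nodes
   are difference quotients of the values of [cs]. *)
Lemma coefs_le_of_values pts :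
  NoDup pts -> exists K, 0 <= K /\ forall cs M, length cs = length pts ->
    (forall x, In x pts -> Rabs (horner cs x) <= M) -> Forall (fun c => Rabs c <= K * M) cs.
Proof.
  induction pts as [|a pts IH]; intros Hnd.
  { exists 0; split; [lra|]; intros [|] M Hl; [constructor|discriminate]. }
  apply NoDup_cons_iff in Hnd as [Ha Hnd].
  destruct (IH Hnd) as [K [HK0 HK]].
  destruct (exists_bound_on_list (fun x => / Rabs (x - a)) pts) as [D [HD0 HD]].
  assert (Hxa : forall x, In x pts -> x - a <> 0) by (intros x Hx E; apply Ha; replace a with x by lra; exact Hx).
  exists ((1 + Rabs a) * (1 + K * (2 * D))); split; [pose proof (Rabs_pos a); assert (0 <= K * (2 * D)) by nra; nra|].
  intros [|c cs] M Hl HM; [discriminate|]; injection Hl as Hl.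
  pose proof (HM a (or_introl eq_refl)) as HMa.
  assert (HM0 : 0 <= M) by (pose proof (Rabs_pos (horner (c :: cs) a)); lra).
  assert (Hq : Forall (fun b => Rabs b <= K * (2 * D * M)) (synth_div a (c :: cs))).
  { apply HK; [rewrite length_synth_div; exact Hl|].
    intros x Hx; specialize (HM x (or_intror Hx)); specialize (HD x Hx).
    replace (horner (synth_div a (c :: cs)) x)
      with ((horner (c :: cs) x - horner (c :: cs) a) / (x - a))
      by (rewrite (horner_synth_div a (c :: cs) x); field; apply Hxa, Hx).
    unfold Rdiv; rewrite Rabs_mult, Rabs_inv.
    assert (Rabs (horner (c :: cs) x - horner (c :: cs) a) <= 2 * M)
      by (unfold Rminus; eapply Rle_trans; [apply Rabs_triang|rewrite Rabs_Ropp; lra]).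
    pose proof (Rabs_pos (horner (c :: cs) x - horner (c :: cs) a)).
    assert (0 <= / Rabs (x - a)) by (left; apply Rinv_0_lt_compat, Rabs_pos_lt, Hxa, Hx).
    nra. }
  eapply Forall_impl; [|apply (coefs_le_of_synth_div a (M + K * (2 * D * M)))].
  - intros y Hy; simpl in Hy; nra.
  - congruence.
  - assert (0 <= K * (2 * D * M)) by (apply Rmult_le_pos; nra); lra.
  - eapply Forall_impl; [|exact Hq]; intros y Hy; simpl in Hy; lra.
Qed.

Lemma horner_app l1 l2 x : horner (l1 ++ l2) x = horner l1 x + x ^ length l1 * horner l2 x.
Proof. induction l1 as [|c l1 IH]; simpl; [ring|rewrite IH; ring]. Qed.

Lemma sum_upto_horner d c x : sum_upto d (fun l => c l * x ^ l) = horner (map c (seq 0 d)) x.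
Proof.
  induction d as [|d IH]; [reflexivity|].
  rewrite seq_S, map_app, horner_app; cbn [sum_upto]; rewrite IH, length_map, length_seq.
  simpl; ring.
Qed.

Definition nat_values_control_coefs (d : nat) (K : R) : Prop :=
  forall (c : nat -> R) M,
    (forall i, (i < d)%nat -> Rabs (sum_upto d (fun l => c l * INR i ^ l)) <= M) ->
    forall l, (l < d)%nat -> Rabs (c l) <= K * M.

Lemma exists_nat_values_control_coefs d : exists K, 0 <= K /\ nat_values_control_coefs d K.
Proof.
  destruct (coefs_le_of_values (map INR (seq 0 d))) as [K [HK0 HK]].
  { apply Injective_map_NoDup; [intros x y; apply INR_eq|apply seq_NoDup]. }
  exists K; split; [exact HK0|]; intros c M HM l Hl.
  assert (Hc : Forall (fun b => Rabs b <= K * M) (map c (seq 0 d))).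
  { apply HK; [rewrite !length_map; reflexivity|].
    intros x Hx; apply in_map_iff in Hx as [i [<- Hi]]; apply in_seq in Hi.
    rewrite <- sum_upto_horner; apply HM; lia. }
  rewrite Forall_forall in Hc; apply Hc, in_map, in_seq; lia.
Qed.

Lemma pow_split_div r a b : 0 < r -> (1 <= a + b)%nat -> r ^ b = r ^ (a + b - 1) * (r / r ^ a).
Proof.
  intros Hr Hab; assert (0 < r ^ a) by (apply pow_lt; lra).
  apply (Rmult_eq_reg_r (r ^ a)); [|lra].
  replace (r ^ (a + b - 1) * (r / r ^ a) * r ^ a) with (r ^ (a + b - 1) * r ^ 1) by (simpl; field; lra).
  rewrite <- !pow_add; f_equal; lia.
Qed.

Definition taylor_const (gamma : nat) (K : R) : R :=
  (K + 1) * INR gamma ^ gamma * INR (fact gamma).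

Lemma taylor_const_pos gamma K : (1 <= gamma)%nat -> 0 <= K -> 0 < taylor_const gamma K.
Proof.
  intros Hg HK; unfold taylor_const.
  assert (1 <= INR gamma) by (apply (le_INR 1); lia).
  pose proof (pow_lt (INR gamma) gamma ltac:(lra)); pose proof (INR_fact_ge1 gamma).
  apply Rmult_lt_0_compat; [apply Rmult_lt_0_compat|]; lra.
Qed.

Section DerivativeTower.

Variables (delta B K : R) (f : nat -> R -> R) (gamma : nat).
Hypothesis Hgamma : (1 <= gamma)%nat.
Hypothesis Hf : smooth_on_0d delta f.
Hypothesis HB : forall r, 0 < r < delta -> Rabs (f (S gamma) r) <= B.

(* The Taylor polynomial of [f 1] of degree [< gamma], evaluated at the
   [gamma] equally spaced nodes [i * rho / gamma], is controlled by [sup |f 1|]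
   on [(0, rho]] and the remainder; inverting at the nodes bounds its coefficients. *)
Lemma derivs_at0_bound rho N :
  0 <= K -> nat_values_control_coefs gamma K ->
  f 1%nat 0 = 0 -> 0 < rho < delta -> (forall t, 0 < t <= rho -> Rabs (f 1%nat t) <= N) ->
  forall j, (1 <= j <= gamma)%nat ->
    Rabs (f j 0) * rho ^ (j - 1) <= taylor_const gamma K * (N + B * rho ^ gamma).
Proof.
  intros HK0 HK Hf10 Hrho HN j Hj.
  set (G := INR gamma); assert (HG : 1 <= G) by (apply (le_INR 1); lia).
  set (h := rho / G); assert (Hh : 0 < h) by (apply Rdiv_lt_0_compat; lra).
  set (M := N + B * rho ^ gamma).
  assert (HB0 : 0 <= B) by (pose proof (HB rho Hrho); pose proof (Rabs_pos (f (S gamma) rho)); lra).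
  assert (HN0 : 0 <= N) by (pose proof (HN rho ltac:(lra)); pose proof (Rabs_pos (f 1%nat rho)); lra).
  assert (HM0 : 0 <= M) by (pose proof (pow_le rho gamma ltac:(lra)); unfold M; nra).
  set (c := fun l => f (S l) 0 * h ^ l / INR (fact l)).
  assert (Hc : forall l, (l < gamma)%nat -> Rabs (c l) <= K * M).
  { apply HK; intros i Hi.
    replace (sum_upto gamma (fun l => c l * INR i ^ l)) with (taylor f 1 gamma (INR i * h)).
    2:{ apply sum_upto_ext; intros l _; unfold c; change (1 + l)%nat with (S l); rewrite Rpow_mult_distr; unfold Rdiv; ring. }
    destruct i as [|i].
    { replace gamma with (S (gamma - 1)) by lia.
      rewrite Rmult_0_l, taylor_at0, Hf10, Rabs_R0; exact HM0. }
    set (t := INR (S i) * h).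
    assert (Ht : 0 < t <= rho).
    { split; [apply Rmult_lt_0_compat; [apply lt_0_INR; lia|exact Hh]|].
      unfold t, h; replace rho with (G * (rho / G)) at 2 by (field; lra).
      apply Rmult_le_compat_r; [left; exact Hh|apply le_INR; lia]. }
    pose proof (taylor_remainder delta B f (S gamma) Hf HB gamma 1 t ltac:(lia) ltac:(lra)).
    pose proof (HN t Ht); assert (t ^ gamma <= rho ^ gamma) by (apply pow_incr; lra).
    replace (taylor f 1 gamma t) with (f 1%nat t + - (f 1%nat t - taylor f 1 gamma t)) by ring.
    eapply Rle_trans; [apply Rabs_triang|rewrite Rabs_Ropp]; unfold M; nra. }
  destruct j as [|l]; [lia|]; replace (S l - 1)%nat with l by lia.
  replace (Rabs (f (S l) 0) * rho ^ l) with (Rabs (c l) * INR (fact l) * G ^ l).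
  2:{ pose proof (INR_fact_ge1 l); assert (0 < h ^ l) by (apply pow_lt; lra).
      unfold c; unfold Rdiv; rewrite !Rabs_mult, Rabs_inv, (Rabs_right (h ^ l)), (Rabs_right (INR (fact l))) by lra.
      unfold h, Rdiv; rewrite Rpow_mult_distr, pow_inv; field; split; [lra|apply pow_nonzero; lra]. }
  specialize (Hc l ltac:(lia)).
  assert (INR (fact l) <= INR (fact gamma)) by (apply le_INR, fact_le; lia).
  assert (G ^ l <= G ^ gamma) by (apply Rle_pow; [lra|lia]).
  pose proof (INR_fact_ge1 l); pose proof (pow_le G l ltac:(lra)); pose proof (Rabs_pos (c l)).
  unfold taylor_const; fold G M.
  assert (Rabs (c l) * INR (fact l) <= (K + 1) * M * INR (fact gamma)) by (apply Rmult_le_compat; nra).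
  apply Rle_trans with ((K + 1) * M * INR (fact gamma) * G ^ gamma); [apply Rmult_le_compat; nra|lra].
Qed.

Lemma value_bound rho Q m :
  f 0%nat 0 = 0 -> 0 < rho < delta ->
  (forall j, (1 <= j <= gamma)%nat -> Rabs (f j 0) * rho ^ (j - 1) <= Q) -> (m <= gamma)%nat ->
  Rabs (f m rho) <= (INR (S gamma) * Q + B * rho ^ gamma) * (rho / rho ^ m).
Proof.
  intros Hf00 Hrho HQ Hm.
  assert (HQ0 : 0 <= Q) by (pose proof (HQ 1%nat ltac:(lia)); pose proof (Rabs_pos (f 1%nat 0)); simpl in *; nra).
  set (P := rho / rho ^ m); assert (HP : 0 < P) by (apply Rdiv_lt_0_compat; [|apply pow_lt]; lra).
  set (d := (S gamma - m)%nat).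
  pose proof (taylor_remainder delta B f (S gamma) Hf HB d m rho ltac:(unfold d; lia) Hrho) as Hrem.
  rewrite (pow_split_div rho m d) in Hrem by (lra || unfold d; lia).
  replace (m + d - 1)%nat with gamma in Hrem by (unfold d; lia); fold P in Hrem.
  assert (Htay : Rabs (taylor f m d rho) <= INR (S gamma) * Q * P).
  { eapply Rle_trans; [apply Rabs_sum_upto|].
    eapply Rle_trans; [apply sum_upto_le with (g2 := fun _ => Q * P)|].
    - intros l Hl; destruct (Nat.eq_dec (m + l) 0) as [E|E].
      { rewrite E, Hf00; unfold Rdiv; rewrite !Rmult_0_l, Rabs_R0; nra. }
      pose proof (Rinv_INR_fact_le1 l) as [Hfact0 Hfact1].
      pose proof (HQ (m + l)%nat ltac:(unfold d in Hl; lia)).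
      rewrite (pow_split_div rho m l) by (lra || lia); fold P.
      unfold Rdiv; rewrite !Rabs_mult, (Rabs_right (rho ^ _)), (Rabs_right P), (Rabs_right (/ _))
        by (apply Rle_ge; try apply pow_le; lra).
      pose proof (Rabs_pos (f (m + l)%nat 0)); pose proof (pow_le rho (m + l - 1) ltac:(lra)).
      assert (Rabs (f (m + l)%nat 0) * (rho ^ (m + l - 1) * P) <= Q * P) by nra.
      assert (0 <= Rabs (f (m + l)%nat 0) * (rho ^ (m + l - 1) * P)) by (apply Rmult_le_pos; nra).
      nra.
    - rewrite sum_upto_const; assert (INR d <= INR (S gamma)) by (apply le_INR; unfold d; lia).
      assert (0 <= Q * P) by nra; nra. }
  replace (f m rho) with ((f m rho - taylor f m d rho) + taylor f m d rho) by ring.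
  eapply Rle_trans; [apply Rabs_triang|]; nra.
Qed.

End DerivativeTower.

Definition lower_const (C0 : R) (gamma : nat) (K : R) : R :=
  C0 / (4 * INR gamma * taylor_const gamma K).

Definition upper_const (gamma : nat) (K : R) : R :=
  2 * (4 * INR (S gamma) * taylor_const gamma K + 1).

Lemma lower_const_pos C0 gamma K :
  0 < C0 -> (1 <= gamma)%nat -> 0 <= K -> 0 < lower_const C0 gamma K.
Proof.
  intros HC0 Hg HK; pose proof (taylor_const_pos gamma K Hg HK).
  assert (1 <= INR gamma) by (apply (le_INR 1); lia).
  apply Rdiv_lt_0_compat; [lra|]; nra.
Qed.

Lemma upper_const_pos gamma K : (1 <= gamma)%nat -> 0 <= K -> 0 < upper_const gamma K.
Proof.
  intros Hg HK; pose proof (taylor_const_pos gamma K Hg HK); pose proof (pos_INR (S gamma)).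
  unfold upper_const; nra.
Qed.

Lemma le_scaled_of_lower_bound rho gamma m C N b x :
  0 < rho <= 1 -> (1 <= gamma <= m)%nat -> 0 < C -> 0 <= b ->
  C * rho ^ (gamma - 1) <= N -> x <= b -> x <= b / C * (rho / rho ^ m) * N.
Proof.
  intros Hrho Hm HC Hb HN Hx.
  assert (Hrm : 0 < rho ^ m) by (apply pow_lt; lra).
  assert (rho ^ m <= rho ^ gamma) by (apply Rle_pow_le1; [lra|lia]).
  assert (Hg : rho ^ gamma = rho * rho ^ (gamma - 1))
    by (replace gamma with (S (gamma - 1)) at 1 by lia; reflexivity).
  assert (HpN : C <= rho / rho ^ m * N).
  { apply (Rmult_le_reg_r (rho ^ m)); [exact Hrm|].
    replace (rho / rho ^ m * N * rho ^ m) with (rho * N) by (field; lra); nra. }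
  assert (Hq : 0 <= b / C) by (apply Rmult_le_pos; [|left; apply Rinv_0_lt_compat]; lra).
  assert (b / C * C = b) by (field; lra).
  rewrite Rmult_assoc; nra.
Qed.

Section ComplexTower.

Variables (delta B K C0 : R) (gamma : nat) (u v : nat -> R -> R).
Hypothesis Hgamma : (2 <= gamma)%nat.
Hypothesis HK0 : 0 <= K.
Hypothesis HK : nat_values_control_coefs gamma K.
Hypothesis Hu : smooth_on_0d delta u.
Hypothesis Hv : smooth_on_0d delta v.
Hypothesis HB : forall r, 0 < r < delta -> cnorm (u (S gamma) r) (v (S gamma) r) <= B.
Hypothesis Huv0 : u 0%nat 0 = 0 /\ v 0%nat 0 = 0 /\ u 1%nat 0 = 0 /\ v 1%nat 0 = 0.
Hypothesis Hmono : forall r1 r2, 0 < r1 -> r1 <= r2 -> r2 < delta ->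
  cnorm (u 1%nat r1) (v 1%nat r1) <= cnorm (u 1%nat r2) (v 1%nat r2).
Hypothesis HC0 : sum_f 2 gamma (fun j => cnorm (u j 0) (v j 0) / INR (fact j)) >= C0.

Local Notation N rho := (cnorm (u 1%nat rho) (v 1%nat rho)).

Lemma coefs_at0_bound rho j : 0 < rho < delta -> (1 <= j <= gamma)%nat ->
  cnorm (u j 0) (v j 0) * rho ^ (j - 1) <= 2 * taylor_const gamma K * (N rho + B * rho ^ gamma).
Proof.
  intros Hrho Hj; destruct Huv0 as [_ [_ [Hu1 Hv1]]].
  assert (HuB : forall r, 0 < r < delta -> Rabs (u (S gamma) r) <= B)
    by (intros r Hr; eapply Rle_trans; [apply Rabs_le_cnorm_l|apply HB, Hr]).
  assert (HvB : forall r, 0 < r < delta -> Rabs (v (S gamma) r) <= B)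
    by (intros r Hr; eapply Rle_trans; [apply Rabs_le_cnorm_r|apply HB, Hr]).
  pose proof (derivs_at0_bound delta B K u gamma ltac:(lia) Hu HuB rho (N rho) HK0 HK Hu1 Hrho
    ltac:(intros t Ht; eapply Rle_trans; [apply Rabs_le_cnorm_l|apply Hmono; lra]) j Hj).
  pose proof (derivs_at0_bound delta B K v gamma ltac:(lia) Hv HvB rho (N rho) HK0 HK Hv1 Hrho
    ltac:(intros t Ht; eapply Rle_trans; [apply Rabs_le_cnorm_r|apply Hmono; lra]) j Hj).
  pose proof (cnorm_le_Rabs_add (u j 0) (v j 0)); pose proof (pow_le rho (j - 1) ltac:(lra)).
  nra.
Qed.

Lemma lower_bound rho : 0 < rho < delta -> rho <= 1 -> B * rho <= lower_const C0 gamma K ->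
  lower_const C0 gamma K * rho ^ (gamma - 1) <= N rho.
Proof.
  intros Hrho Hr1 HBr; set (C := lower_const C0 gamma K).
  set (L := 2 * taylor_const gamma K); set (M := N rho + B * rho ^ gamma).
  assert (HL : 0 < L) by (pose proof (taylor_const_pos gamma K ltac:(lia) HK0); unfold L; lra).
  assert (Hg : rho ^ gamma = rho * rho ^ (gamma - 1))
    by (replace gamma with (S (gamma - 1)) at 1 by lia; reflexivity).
  pose proof (pow_le rho (gamma - 1) ltac:(lra)).
  assert (Hsum : C0 * rho ^ (gamma - 1) <= INR gamma * L * M).
  { set (g := fun j => cnorm (u j 0) (v j 0) / INR (fact j)) in HC0.
    assert (Hterm : forall i, (i <= gamma - 2)%nat -> g (i + 2)%nat * rho ^ (gamma - 1) <= L * M).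
    { intros i Hi; set (j := (i + 2)%nat).
      pose proof (coefs_at0_bound rho j Hrho ltac:(unfold j; lia)) as Hc; fold L M in Hc.
      pose proof (Rinv_INR_fact_le1 j) as [Hf0 Hf1]; pose proof (cnorm_ge0 (u j 0) (v j 0)).
      assert (rho ^ (gamma - 1) <= rho ^ (j - 1)) by (apply Rle_pow_le1; [lra|unfold j; lia]).
      assert (cnorm (u j 0) (v j 0) * rho ^ (gamma - 1) <= L * M) by nra.
      assert (0 <= cnorm (u j 0) (v j 0) * rho ^ (gamma - 1)) by (apply Rmult_le_pos; lra).
      unfold g, Rdiv; nra. }
    pose proof (sum_Rle _ _ _ Hterm) as Hs.
    rewrite sum_cte, <- scal_sum in Hs; unfold sum_f in HC0.
    assert (INR (S (gamma - 2)) <= INR gamma) by (apply le_INR; lia).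
    assert (0 <= M).
    { pose proof (HB rho Hrho); pose proof (cnorm_ge0 (u (S gamma) rho) (v (S gamma) rho)).
      pose proof (cnorm_ge0 (u 1%nat rho) (v 1%nat rho)); pose proof (pow_le rho gamma ltac:(lra)).
      unfold M; nra. }
    assert (0 <= L * M) by (apply Rmult_le_pos; lra).
    apply Rle_trans with (rho ^ (gamma - 1) * sum_f_R0 (fun i => g (i + 2)%nat) (gamma - 2)); nra. }
  assert (HBC : B * rho ^ gamma <= C * rho ^ (gamma - 1)) by (rewrite Hg; unfold C; nra).
  assert (HC : C * (2 * (INR gamma * L)) = C0).
  { unfold C, lower_const, L; field; pose proof (taylor_const_pos gamma K ltac:(lia) HK0).
    assert (1 <= INR gamma) by (apply (le_INR 1); lia); lra. }
  assert (HgL : 0 < INR gamma * L) by (assert (1 <= INR gamma) by (apply (le_INR 1); lia); nra).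
  unfold M in Hsum; nra.
Qed.

Lemma upper_bound rho m : 0 < rho < delta -> rho <= 1 -> B * rho <= lower_const C0 gamma K ->
  (m <= gamma)%nat -> cnorm (u m rho) (v m rho) <= upper_const gamma K * (rho / rho ^ m) * N rho.
Proof.
  intros Hrho Hr1 HBr Hm; destruct Huv0 as [Hu0 [Hv0 _]].
  pose proof (lower_bound rho Hrho Hr1 HBr) as Hlow.
  set (L := taylor_const gamma K); set (P := rho / rho ^ m).
  assert (HP : 0 < P) by (apply Rdiv_lt_0_compat; [|apply pow_lt]; lra).
  assert (HBN : B * rho ^ gamma <= N rho).
  { replace gamma with (S (gamma - 1)) at 1 by lia; simpl pow.
    pose proof (pow_le rho (gamma - 1) ltac:(lra)); nra. }
  assert (HuB : forall r, 0 < r < delta -> Rabs (u (S gamma) r) <= B)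
    by (intros r Hr; eapply Rle_trans; [apply Rabs_le_cnorm_l|apply HB, Hr]).
  assert (HvB : forall r, 0 < r < delta -> Rabs (v (S gamma) r) <= B)
    by (intros r Hr; eapply Rle_trans; [apply Rabs_le_cnorm_r|apply HB, Hr]).
  assert (HQ : forall (w : nat -> R -> R), (forall j, Rabs (w j 0) <= cnorm (u j 0) (v j 0)) ->
    forall j, (1 <= j <= gamma)%nat -> Rabs (w j 0) * rho ^ (j - 1) <= 2 * L * (N rho + B * rho ^ gamma)).
  { intros w Hw j Hj; eapply Rle_trans; [|apply (coefs_at0_bound rho j Hrho Hj)].
    apply Rmult_le_compat_r; [apply pow_le; lra|apply Hw]. }
  pose proof (value_bound delta B u gamma ltac:(lia) Hu HuB rho _ m Hu0 Hrho (HQ u (fun j => Rabs_le_cnorm_l _ _)) Hm) as Hvu.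
  pose proof (value_bound delta B v gamma ltac:(lia) Hv HvB rho _ m Hv0 Hrho (HQ v (fun j => Rabs_le_cnorm_r _ _)) Hm) as Hvv.
  fold P in Hvu; fold P in Hvv; pose proof (cnorm_le_Rabs_add (u m rho) (v m rho)).
  assert (HL : 0 < L) by (apply taylor_const_pos; lia || exact HK0).
  pose proof (pos_INR (S gamma)); pose proof (cnorm_ge0 (u 1%nat rho) (v 1%nat rho)).
  assert (INR (S gamma) * (2 * L * (N rho + B * rho ^ gamma)) + B * rho ^ gamma
          <= (4 * INR (S gamma) * L + 1) * N rho).
  { assert (0 <= INR (S gamma) * L) by nra; nra. }
  unfold upper_const; fold L; nra.
Qed.

Lemma tower_estimates (bf : nat -> R) rho :
  0 < C0 -> (forall m, 0 <= bf m) -> (forall m, cnorm (u m rho) (v m rho) <= bf m) ->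
  0 < rho < delta -> rho <= 1 -> B * rho <= lower_const C0 gamma K ->
  N rho >= lower_const C0 gamma K * rho ^ (gamma - 1) /\
  forall m, cnorm (u m rho) (v m rho)
    <= (upper_const gamma K + bf m / lower_const C0 gamma K) * powerRZ rho (1 - Z.of_nat m) * N rho.
Proof.
  intros HC0pos Hbf0 Hbf Hrho Hr1 HBr; set (C := lower_const C0 gamma K).
  assert (HC : 0 < C) by (apply lower_const_pos; lia || assumption).
  pose proof (lower_bound rho Hrho Hr1 HBr) as Hlow; fold C in Hlow; split; [lra|].
  intros m; rewrite powerRZ_1_sub by lra.
  assert (HP : 0 < rho / rho ^ m) by (apply Rdiv_lt_0_compat; [|apply pow_lt]; lra).
  pose proof (cnorm_ge0 (u 1%nat rho) (v 1%nat rho)).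
  assert (0 <= bf m / C * (rho / rho ^ m) * N rho)
    by (apply Rmult_le_pos; [apply Rmult_le_pos; [apply Rmult_le_pos; [apply Hbf0|left; apply Rinv_0_lt_compat; lra]|lra]|lra]).
  assert (0 <= upper_const gamma K * (rho / rho ^ m) * N rho)
    by (pose proof (upper_const_pos gamma K ltac:(lia) HK0); apply Rmult_le_pos; nra).
  rewrite !Rmult_plus_distr_r.
  destruct (le_lt_dec m gamma) as [Hm|Hm].
  - pose proof (upper_bound rho m Hrho Hr1 HBr Hm); lra.
  - pose proof (le_scaled_of_lower_bound rho gamma m C (N rho) (bf m) _ ltac:(lra) ltac:(lia) HC
      (Hbf0 m) Hlow (Hbf m)); lra.
Qed.

End ComplexTower.

Lemma choose_positive_bounds (M : Type) (delta : R) (n : nat -> M -> R -> R) :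
  (forall k, exists b, forall mu r, 0 < r < delta -> n k mu r <= b) ->
  exists bf : nat -> R, forall k, 0 < bf k /\ forall mu r, 0 < r < delta -> n k mu r <= bf k.
Proof.
  intros Hn; apply (functional_choice (fun k b => 0 < b /\ forall mu r, 0 < r < delta -> n k mu r <= b)).
  intros k; destruct (Hn k) as [b Hb]; exists (Rabs b + 1); split; [pose proof (Rabs_pos b); lra|].
  intros mu r Hr; pose proof (Hb mu r Hr); pose proof (Rle_abs b); lra.
Qed.

Theorem mainTheorem3 (M : Type) (gamma : nat) (delta : R)
  (u v : nat -> M -> R -> R)
  (Hgamma : (2 <= gamma)%nat)
  (Hdelta : 0 < delta)
  (Hsmooth : forall mu, smooth_on_0d delta (fun k => u k mu)
                     /\ smooth_on_0d delta (fun k => v k mu))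
  (F1 : forall mu, u 0%nat mu 0 = 0 /\ v 0%nat mu 0 = 0 /\
                   u 1%nat mu 0 = 0 /\ v 1%nat mu 0 = 0)
  (F2 : exists C, 0 < C /\ forall mu,
          sum_f 2 gamma (fun j => cnorm (u j mu 0) (v j mu 0) / INR (fact j)) >= C)
  (F3 : forall mu r1 r2, 0 < r1 -> r1 <= r2 -> r2 < delta ->
          cnorm (u 1%nat mu r1) (v 1%nat mu r1) <= cnorm (u 1%nat mu r2) (v 1%nat mu r2))
  (F4 : forall k, exists B, forall mu r, 0 < r < delta ->
          cnorm (u k mu r) (v k mu r) <= B) :
  exists delta1, 0 < delta1 <= delta /\
  exists C (Cm : nat -> R), 0 < C /\ (forall m, 0 < Cm m) /\
    forall mu r, 0 < r < delta1 ->
      cnorm (u 1%nat mu r) (v 1%nat mu r) >= C * r ^ (gamma - 1) /\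
      forall m, cnorm (u m mu r) (v m mu r)
                <= Cm m * powerRZ r (1 - Z.of_nat m) * cnorm (u 1%nat mu r) (v 1%nat mu r).
Proof.
  destruct F2 as [C0 [HC0 HF2]].
  destruct (choose_positive_bounds M delta (fun k mu r => cnorm (u k mu r) (v k mu r)) F4) as [bf Hbf].
  destruct (exists_nat_values_control_coefs gamma) as [K [HK0 HK]].
  set (C := lower_const C0 gamma K); set (B := bf (S gamma)).
  assert (HC : 0 < C) by (apply lower_const_pos; lia || assumption).
  assert (HB : 0 < B) by apply Hbf.
  pose proof (Rmin_l delta (Rmin 1 (C / B))); pose proof (Rmin_r delta (Rmin 1 (C / B))).
  pose proof (Rmin_l 1 (C / B)); pose proof (Rmin_r 1 (C / B)).
  assert (0 < C / B) by (apply Rdiv_lt_0_compat; lra).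
  exists (Rmin delta (Rmin 1 (C / B))); split; [split; [repeat apply Rmin_glb_lt; lra|lra]|].
  exists C, (fun m => upper_const gamma K + bf m / C); split; [exact HC|split].
  - intros m; pose proof (upper_const_pos gamma K ltac:(lia) HK0).
    assert (0 < bf m / C) by (apply Rdiv_lt_0_compat; [apply Hbf|exact HC]); lra.
  - intros mu r Hr; destruct (Hsmooth mu) as [Hu Hv].
    assert (HBr : B * r <= C).
    { replace C with (B * (C / B)) by (field; lra); apply Rmult_le_compat_l; lra. }
    apply (tower_estimates delta B K C0 gamma (fun k => u k mu) (fun k => v k mu)); try lra; auto.
    + intros r' Hr'; apply Hbf; exact Hr'.
    + intros m; left; apply Hbf.
    + intros m; apply Hbf; lra.
Qed.
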